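(* Let $\Gamma$ be a discrete group. The global $L^2$-character map induces a map $\operatorname{ch}^\Gamma\otimes_{\mathbb Z}\mathbb Q:A(\Gamma)\otimes_{\mathbb Z}\mathbb Q\to\prod_{(K)}\mathbb Q$ which is injective. If $\Gamma$ has only finitely many conjugacy classes of finite subgroups, it is bijective.
   Context: The Burnside group $A(\Gamma)$ is the Grothendieck group of the monoid (under disjoint union) of isomorphism classes of proper cocompact $\Gamma$-sets (all isotropy groups finite, finitely many orbits); it is free abelian on $[\Gamma/H]$, $H$ running over conjugacy classes of finite subgroups. For a finite subgroup $K$, with $WK=N_\Gamma K/K$, $\operatorname{ch}^\Gamma_K:A(\Gamma)\to\mathbb Q$ sends $[S]$ to $\sum_{i=1}^r|L_i|^{-1}$, where $WK/L_1,\dots,WK/L_r$ are the $WK$-orbits of $S^K$. The global $L^2$-character map is $\operatorname{ch}^\Gamma=\prod_{(K)}\operatorname{ch}^\Gamma_K:A(\Gamma)\to\prod_{(K)}\mathbb Q$, $(K)$ ranging over conjugacy classes of finite subgroups of $\Gamma$. *)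

From HB Require Import structures.
From mathcomp Require Import all_boot all_order all_algebra.
From mathcomp Require Import finmap.
From mathcomp Require Import boolp classical_sets functions cardinality fsbigop.
Set Implicit Arguments. Unset Strict Implicit. Unset Printing Implicit Defensive.
Import Order.TTheory GRing.Theory Num.Theory.
Local Open Scope classical_set_scope.
Local Open Scope ring_scope.

Record group := Group {
  gcar :> Type;
  gmul : gcar -> gcar -> gcar;
  ginv : gcar -> gcar;
  gone : gcar;
  gmulA : forall x y z, gmul x (gmul y z) = gmul (gmul x y) z;
  gmul1x : forall x, gmul gone x = x;
  gmulx1 : forall x, gmul x gone = x;
  gmulVx : forall x, gmul (ginv x) x = gone;
  gmulxV : forall x, gmul x (ginv x) = gone }.

Section Groups.
Variable G : group.
Local Notation "x * y" := (gmul x y).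
Local Notation "x ^-1" := (ginv x).
Local Notation "1" := (@gone G).

Definition is_subgroup (K : set G) : Prop :=
  K 1 /\ (forall x y, K x -> K y -> K (x * y)) /\ (forall x, K x -> K (x ^-1)).

Definition fin_subgroup (K : set G) : Prop := is_subgroup K /\ finite_set K.

Definition conjs (g : G) (K : set G) : set G := [set g * k * g ^-1 | k in K].

Definition normalizer (K : set G) : set G := [set g | conjs g K = K].

(** left coset g K (an element of the Weyl group W K = N K / K when g in N K) *)
Definition lcoset (g : G) (K : set G) : set G := [set g * k | k in K].

Definition conj_class_of (K : set G) : set (set G) := [set conjs g K | g in setT].

Definition is_conj_class (C : set (set G)) : Prop :=
  exists2 K, fin_subgroup K & C = conj_class_of K.

Definition class_rep (C : set (set G)) : set G := xget set0 C.

Record gset := GSet {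
  gs_car :> Type;
  gact : G -> gs_car -> gs_car;
  gact1 : forall s, gact 1 s = s;
  gactM : forall g h s, gact (g * h) s = gact g (gact h s) }.

Definition stab (S : gset) (s : S) : set G := [set g | gact g s = s].
Definition orbit (S : gset) (s : S) : set S := [set gact g s | g in setT].

Definition proper_gset (S : gset) : Prop := forall s : S, finite_set (stab s).
Definition cocompact_gset (S : gset) : Prop :=
  finite_set [set O : set S | exists s, O = orbit s].

Definition gset_iso (S T : gset) : Prop :=
  exists (f : S -> T) (f' : T -> S),
    cancel f f' /\ cancel f' f /\ forall g s, f (gact g s) = gact g (f s).

Definition gsum (S T : gset) : gset.
refine (@GSet (S + T)%type
  (fun g x => match x with inl s => inl (gact g s) | inr t => inr (gact g t) end) _ _).
- by case=> s; rewrite gact1.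
- by move=> g h [s|t]; rewrite gactM.
Defined.

Definition gscale (n : nat) (S : gset) : gset.
refine (@GSet (S * 'I_n)%type (fun g x => (gact g x.1, x.2)) _ _).
- by case=> s i; rewrite gact1.
- by move=> g h [s i]; rewrite gactM.
Defined.

Definition fixpts (S : gset) (K : set G) : set S :=
  [set s | forall k, K k -> gact k s = s].

Arguments fixpts : clear implicits.

(** W K-orbit of s in S^K (W K = N K / K acts through N K) *)
Definition W_orbit (S : gset) (K : set G) (s : S) : set S :=
  [set gact g s | g in normalizer K].

Definition W_orbits (S : gset) (K : set G) : set (set S) :=
  [set O | exists2 s : S, fixpts S K s & O = W_orbit K s].

Arguments W_orbits : clear implicits.

Definition W_isotropy (S : gset) (K : set G) (s : S) : set (set G) :=
  [set lcoset g K | g in normalizer K `&` stab s].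

Definition W_isotropy_order (S : gset) (K : set G) (s : S) : nat :=
  #|` fset_set (W_isotropy K s)|%fset.

(** 1/|L| for the orbit WK/L = O (L = isotropy of a chosen point of O) *)
Definition orbit_weight (S : gset) (K : set G) (O : set S) : rat :=
  xget 0 [set q : rat | exists2 s, O s & q = GRing.inv ((W_isotropy_order K s)%:R : rat)].

Definition chK (K : set G) (S : gset) : rat :=
  \sum_(O \in W_orbits S K) orbit_weight K O.

Record pcgset := PCGSet {
  pc_set :> gset;
  pc_proper : proper_gset pc_set;
  pc_cocompact : cocompact_gset pc_set }.

(** Elements of A(Gamma) (x) Q, written ([P] - [N]) (x) 1/(d+1).
    (A(Gamma) is the Grothendieck group of the monoid of iso classes of
    proper cocompact Gamma-sets; A (x)_Z Q is its localization at nonzero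
    integers.) *)
Record AQ := MkAQ { aq_pos : pcgset; aq_neg : pcgset; aq_den : nat }.

(** Equality in A(Gamma) (x) Q:  x/n = y/m  iff  k (m x - n y) = 0 in A(Gamma)
    for some k > 0, and  [P]-[N] = 0 in the Grothendieck group iff
    P + U ~= N + U for some U in the monoid. *)
Definition AQ_eq (a b : AQ) : Prop :=
  let na := (aq_den a).+1 in let nb := (aq_den b).+1 in
  exists2 k : nat, (0 < k)%N &
  exists U : pcgset,
    gset_iso
      (gsum (gsum (gscale (k * nb) (aq_pos a)) (gscale (k * na) (aq_neg b))) U)
      (gsum (gsum (gscale (k * nb) (aq_neg a)) (gscale (k * na) (aq_pos b))) U).

Definition chQ_K (K : set G) (a : AQ) : rat :=
  (chK K (aq_pos a) - chK K (aq_neg a)) / ((aq_den a).+1)%:R.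

Definition chQ (a : AQ) (C : set (set G)) : rat := chQ_K (class_rep C) a.

End Groups.

(* Additivity and isomorphism invariance of ch_K give well-definedness.
   For injectivity it suffices to show that proper cocompact Γ-sets S, T
   with the same characters are isomorphic.  Take a point x of S or T whose
   isotropy group has maximal order, say x in S.  Then ch_(G_x) S > 0, so
   some y in T is fixed by a conjugate of G_x, and by maximality G_y is that
   conjugate; the orbits of x and y are isomorphic, and removing them
   reduces the number of orbits.  For surjectivity, ch_K [Γ/H] vanishes
   when |H| <= |K| unless (K) = (H), and ch_H [Γ/H] > 0; ordering the
   finitely many classes by the order of a representative makes the system
   ch_K(a) = c_K triangular. *)

From Pilot Require Import Defs.
From HB Require Import structures.
From mathcomp Require Import all_boot all_order all_algebra.
From mathcomp Require Import finmap.
From mathcomp Require Import boolp classical_sets functions cardinality fsbigop.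
From mathcomp Require Import ring lra.
Set Implicit Arguments. Unset Strict Implicit. Unset Printing Implicit Defensive.
Import Order.TTheory GRing.Theory Num.Theory.
Local Open Scope classical_set_scope.

Local Notation "x ⋆ y" := (gmul x y) (at level 40, left associativity).

Section GroupLemmas.
Variable G : group.
Implicit Types (g h x y : G) (K : set G).

Lemma gmulKx g x : ginv g ⋆ (g ⋆ x) = x.
Proof. by rewrite gmulA gmulVx gmul1x. Qed.
Lemma gmulKVx g x : g ⋆ (ginv g ⋆ x) = x.
Proof. by rewrite gmulA gmulxV gmul1x. Qed.
Lemma gmulxK g x : x ⋆ g ⋆ ginv g = x.
Proof. by rewrite -gmulA gmulxV gmulx1. Qed.
Lemma gmulxKV g x : x ⋆ ginv g ⋆ g = x.
Proof. by rewrite -gmulA gmulVx gmulx1. Qed.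
Lemma gmulxI g x y : g ⋆ x = g ⋆ y -> x = y.
Proof. by move=> E; rewrite -(gmulKx g x) E gmulKx. Qed.
Lemma gmulIx g x y : x ⋆ g = y ⋆ g -> x = y.
Proof. by move=> E; rewrite -(gmulxK g x) E gmulxK. Qed.
Lemma ginvK x : ginv (ginv x) = x.
Proof. by apply: (@gmulxI (ginv x)); rewrite gmulxV gmulVx. Qed.
Lemma ginvM x y : ginv (x ⋆ y) = ginv y ⋆ ginv x.
Proof. by apply: (@gmulxI (x ⋆ y)); rewrite gmulxV -gmulA gmulKVx gmulxV. Qed.
Lemma ginv1 : ginv (gone G) = gone G.
Proof. by rewrite -{2}(gmulVx (gone G)) gmulx1. Qed.

Lemma conjsM g h K : conjs g (conjs h K) = conjs (g ⋆ h) K.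
Proof.
apply/seteqP; split=> x /=.
  by case=> y [k Kk <-] <-; exists k => //; rewrite ginvM !gmulA.
case=> k Kk <-; exists (h ⋆ k ⋆ ginv h); first by exists k.
by rewrite ginvM !gmulA.
Qed.
Lemma conjs1 K : conjs (gone G) K = K.
Proof.
apply/seteqP; split=> x /=; first by case=> k Kk <-; rewrite ginv1 gmulx1 gmul1x.
by move=> Kx; exists x => //; rewrite ginv1 gmulx1 gmul1x.
Qed.
Lemma conjsK g K : conjs (ginv g) (conjs g K) = K.
Proof. by rewrite conjsM gmulVx conjs1. Qed.
Lemma conjsKV g K : conjs g (conjs (ginv g) K) = K.
Proof. by rewrite conjsM gmulxV conjs1. Qed.
Lemma conjsS g (A B : set G) : A `<=` B -> conjs g A `<=` conjs g B.
Proof. by move=> AB x [k Ak <-]; exists k => //; apply: AB. Qed.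

Lemma normalizerM g h K : normalizer K g -> normalizer K h -> normalizer K (g ⋆ h).
Proof. by rewrite /normalizer /= => Ng Nh; rewrite -conjsM Nh Ng. Qed.
Lemma normalizerV g K : normalizer K g -> normalizer K (ginv g).
Proof. by rewrite /normalizer /= => Ng; rewrite -{1}Ng conjsK. Qed.
Lemma normalizer1 K : normalizer K (gone G).
Proof. exact: conjs1. Qed.

Lemma is_subgroup_conjs g K : is_subgroup K -> is_subgroup (conjs g K).
Proof.
case=> K1 [KM KV]; split; last split.
- by exists (gone G) => //; rewrite gmulx1 gmulxV.
- move=> _ _ [a Ka <-] [b Kb <-]; exists (a ⋆ b); first exact: KM.
  by rewrite !gmulA gmulxKV.
- move=> _ [a Ka <-]; exists (ginv a); first exact: KV.
  by rewrite !ginvM ginvK gmulA.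
Qed.
Lemma finite_conjs g K : finite_set K -> finite_set (conjs g K).
Proof. exact: finite_image. Qed.

Lemma conj_class_conjs g K : conj_class_of (conjs g K) = conj_class_of K.
Proof.
apply/seteqP; split=> A /=; first by case=> h _ <-; exists (h ⋆ g) => //; rewrite conjsM.
by case=> h _ <-; exists (h ⋆ ginv g) => //; rewrite conjsM gmulxKV.
Qed.

Lemma class_repP K : exists g, class_rep (conj_class_of K) = conjs g K.
Proof.
have : conj_class_of K (class_rep (conj_class_of K)).
  by apply: xgetPex; exists K; exists (gone G) => //; exact: conjs1.
by case=> g _ <-; exists g.
Qed.

Lemma class_rep_class (C : set (set G)) : is_conj_class C -> conj_class_of (class_rep C) = C.
Proof. by case=> K _ ->; have [g ->] := class_repP K; rewrite conj_class_conjs. Qed.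

Lemma fin_subgroup_class_rep (C : set (set G)) : is_conj_class C -> fin_subgroup (class_rep C).
Proof.
case=> K [sK fK] ->; have [g ->] := class_repP K.
by split; [exact: is_subgroup_conjs|exact: finite_conjs].
Qed.

End GroupLemmas.

Definition card_set (T : choiceType) (A : set T) : nat := #|` fset_set A|%fset.

Section CardSet.
Variable T : choiceType.
Implicit Types A B : set T.

Lemma card_set_inj_image (U : choiceType) (f : T -> U) A :
  finite_set A -> {in A &, injective f} -> card_set (f @` A) = card_set A.
Proof.
move=> fA fi; rewrite /card_set fset_set_image //.
by apply/eqP/card_in_imfsetP => x y; rewrite !in_fset_set // => xA yA; apply: fi.
Qed.

Lemma card_set_image_le (U : choiceType) (f : T -> U) A :
  finite_set A -> (card_set (f @` A) <= card_set A)%N.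
Proof. by move=> fA; rewrite /card_set fset_set_image // leq_imfset_card. Qed.

Lemma card_set_subset A B : finite_set B -> A `<=` B -> (card_set A <= card_set B)%N.
Proof.
move=> fB AB; have fA := sub_finite_set AB fB.
by apply: fsubset_leq_card; rewrite -fset_set_sub.
Qed.

Lemma card_set_subset_eq A B :
  finite_set B -> A `<=` B -> (card_set B <= card_set A)%N -> A = B.
Proof.
move=> fB AB le; have fA := sub_finite_set AB fB.
apply: fset_set_inj => //; apply/eqP; rewrite eqEfcard le andbT.
by rewrite -fset_set_sub.
Qed.

Lemma card_set_proper A B x :
  finite_set B -> A `<=` B -> B x -> ~ A x -> (card_set A < card_set B)%N.
Proof.
move=> fB AB Bx nAx; rewrite ltnNge; apply/negP => le.
by apply: nAx; rewrite (card_set_subset_eq fB AB le).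
Qed.

Lemma card_set_gt0 A x : finite_set A -> A x -> (0 < card_set A)%N.
Proof.
move=> fA Ax; rewrite /card_set cardfs_gt0; apply/fset0Pn; exists x.
by rewrite in_fset_set // inE.
Qed.

Lemma finite_subsets A : finite_set A -> finite_set [set B | B `<=` A].
Proof.
move=> fA; pose subsets := (fun F : {fset T} => [set` F]) @` [set` fpowerset (fset_set A)].
apply: (@sub_finite_set _ _ subsets).
  move=> B /= BA; exists (fset_set B); last exact: fset_setK (sub_finite_set BA fA).
  by rewrite /= fpowersetE -fset_set_sub //; exact: sub_finite_set BA fA.
exact/finite_image/finite_fset.
Qed.

End CardSet.

Lemma finite_nat_max (Z : set nat) : finite_set Z -> Z !=set0 ->
  exists2 m, Z m & forall n, Z n -> (n <= m)%N.
Proof.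
move=> fZ [n0 Zn0].
have ub i : `[< Z i >] -> (i <= \sum_(k <- fset_set Z) k)%N.
  move=> /asboolP Zi; rewrite (big_rem i) /= ?leq_addr //.
  by rewrite in_fset_set // inE.
have [|m /asboolP Zm mx] := ex_maxnP _ ub; first by exists n0; apply/asboolP.
by exists m => // n Zn; apply/mx/asboolP.
Qed.

Lemma image_set_inj (T U : Type) (f : T -> U) : injective f -> injective (image^~ f).
Proof.
move=> fi A B AB; apply/seteqP; split=> x Ax.
  have : (f @` B) (f x) by rewrite -AB; exists x.
  by case=> y By /fi <-.
have : (f @` A) (f x) by rewrite AB; exists x.
by case=> y Ay /fi <-.
Qed.

Section GSets.
Variable G : group.
Implicit Types (g h : G) (K : set G).

Definition gcard (A : set G) : nat := @card_set {classic G} A.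

Lemma gcard_conjs g K : finite_set K -> gcard (conjs g K) = gcard K.
Proof.
move=> fK; apply: (@card_set_inj_image {classic G} {classic G}) => // x y _ _.
by move/gmulIx/gmulxI.
Qed.

Definition equivariant (S T : gset G) (f : S -> T) :=
  forall g s, f (gact g s) = gact g (f s).

Section Action.
Variable S : gset G.
Implicit Types s t : S.

Lemma gactK g s : gact (ginv g) (gact g s) = s.
Proof. by rewrite -gactM gmulVx gact1. Qed.
Lemma gactKV g s : gact g (gact (ginv g) s) = s.
Proof. by rewrite -gactM gmulxV gact1. Qed.

Lemma stab_act g s : stab (gact g s) = conjs g (stab s).
Proof.
apply/seteqP; split=> h /=.
  move=> hs; exists (ginv g ⋆ h ⋆ g); last by rewrite !gmulA gmulxV gmul1x gmulxK.
  by rewrite /stab /= !gactM hs gactK.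
by case=> k ks <-; rewrite /stab /= !gactM gactK ks.
Qed.

Lemma is_subgroup_stab s : is_subgroup (stab s).
Proof.
split; first exact: gact1.
split=> [x y /= xs ys|x /= xs]; first by rewrite /stab /= gactM ys xs.
by rewrite /stab /= -{1}xs gactK.
Qed.

Lemma gcard_stab_act g s : finite_set (stab s) -> gcard (stab (gact g s)) = gcard (stab s).
Proof. by move=> fs; rewrite stab_act gcard_conjs. Qed.

Lemma orbit_act g s : Defs.orbit (gact g s) = Defs.orbit s.
Proof.
apply/seteqP; split=> t /=; first by case=> h _ <-; exists (h ⋆ g) => //; rewrite gactM.
by case=> h _ <-; exists (h ⋆ ginv g) => //; rewrite gactM gactK.
Qed.

Lemma orbit_self s : Defs.orbit s s.
Proof. by exists (gone G) => //; exact: gact1. Qed.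

Lemma W_orbit_self K s : W_orbit K s s.
Proof. by exists (gone G); [exact: normalizer1|exact: gact1]. Qed.

Lemma W_orbit_act K n s : normalizer K n -> W_orbit K (gact n s) = W_orbit K s.
Proof.
move=> Nn; apply/seteqP; split=> t /=.
  by case=> h Nh <-; exists (h ⋆ n); [exact: normalizerM|rewrite gactM].
case=> h Nh <-; exists (h ⋆ ginv n); last by rewrite gactM gactK.
exact/normalizerM/normalizerV.
Qed.

Lemma fixpts_act K n s : @fixpts G S K s -> normalizer K n -> @fixpts G S K (gact n s).
Proof.
move=> fs Nn k Kk; have : conjs n K k by rewrite Nn.
by case=> k' Kk' <-; rewrite gactM gactK gactM (fs k' Kk').
Qed.

(* A W K-orbit meeting the orbit of s0 is determined by which conjugate of K
   lies in stab s0, and there are finitely many subsets of stab s0. *)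
Lemma finite_W_orbits_in_orbit K s0 : finite_set (stab s0) ->
  finite_set [set W_orbit K s | s in Defs.orbit s0 `&` @fixpts G S K].
Proof.
move=> fs0.
pose W_orbit_of (Q : set G) := xget set0
  [set W : set S | exists g, conjs (ginv g) K = Q /\ W = W_orbit K (gact g s0)].
apply: (@sub_finite_set _ _ (W_orbit_of @` [set Q | Q `<=` stab s0])); last first.
  exact/finite_image/(@finite_subsets {classic G}).
move=> W [s [[g _ <-] fx] <-]; exists (conjs (ginv g) K).
  have Kstab : K `<=` stab (gact g s0) := fx.
  by have := conjsS (g := ginv g) Kstab; rewrite stab_act conjsK.
apply: xget_unique; first by exists g.
move=> W' [h [eqh ->]].
have Nhg : normalizer K (h ⋆ ginv g) by rewrite /normalizer /= -conjsM -eqh conjsKV.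
by rewrite -(gmulxKV g h) gactM W_orbit_act.
Qed.

Lemma finite_W_orbits K : proper_gset S -> cocompact_gset S -> finite_set (@W_orbits G S K).
Proof.
move=> pS cS.
pose F (O : set S) := [set W | exists2 s0, O = Defs.orbit s0 &
   [set W_orbit K s | s in Defs.orbit s0 `&` @fixpts G S K] W].
apply: (@sub_finite_set _ _ (\bigcup_(O in [set O : set S | exists s, O = Defs.orbit s]) F O)).
  move=> W [s fs ->]; exists (Defs.orbit s); first by exists s.
  by exists s => //; exists s => //; split => //; exact: orbit_self.
apply: bigcup_finite => // O [s0 ->].
apply: sub_finite_set (finite_W_orbits_in_orbit K (pS s0)).
by move=> W [s1 e1]; rewrite -e1.
Qed.

Lemma exists_max_stab s0 : proper_gset S -> cocompact_gset S ->
  exists s, forall t, (gcard (stab t) <= gcard (stab s))%N.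
Proof.
move=> pS cS.
pose orbit_gcard (O : set S) := xget 0%N [set n | exists2 t, O t & n = gcard (stab t)].
have orbit_gcardE t : orbit_gcard (Defs.orbit t) = gcard (stab t).
  apply: xget_unique; first by exists t => //; exact: orbit_self.
  by move=> n [t' [g _ <-] ->]; rewrite gcard_stab_act.
have fZ : finite_set [set n | exists t, n = gcard (stab t)].
  apply: sub_finite_set (finite_image orbit_gcard cS).
  by move=> n [t ->]; exists (Defs.orbit t); [exists t|rewrite orbit_gcardE].
have [_ [s ->] smax] := finite_nat_max fZ (ex_intro _ _ (ex_intro _ s0 erefl)).
by exists s => t; apply: smax; exists t.
Qed.

End Action.

Section Equivariant.
Variables (S T : gset G) (i : S -> T).
Hypothesis i_eq : equivariant i.

Lemma orbit_equivariant s : Defs.orbit (i s) = i @` Defs.orbit s.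
Proof.
apply/seteqP; split=> y /=; first by case=> g _ <-; exists (gact g s); [exists g|rewrite i_eq].
by case=> _ [g _ <-] <-; exists g => //; rewrite i_eq.
Qed.

Lemma W_orbit_equivariant K s : W_orbit K (i s) = i @` W_orbit K s.
Proof.
apply/seteqP; split=> y /=; first by case=> g Ng <-; exists (gact g s); [exists g|rewrite i_eq].
by case=> _ [g Ng <-] <-; exists g => //; rewrite i_eq.
Qed.

Hypothesis i_inj : injective i.

Lemma stab_equivariant s : stab (i s) = stab s.
Proof.
apply/seteqP; split=> g; rewrite /stab /= -i_eq; first exact: i_inj.
by move=> ->.
Qed.

Lemma fixpts_equivariant K s : @fixpts G T K (i s) <-> @fixpts G S K s.
Proof.
split=> fs k Kk; have := fs k Kk; rewrite -i_eq; first exact: i_inj.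
by move=> ->.
Qed.

Lemma orbit_weight_equivariant K (O : set S) : orbit_weight K (i @` O) = orbit_weight K O.
Proof.
have ord s : W_isotropy_order K (i s) = W_isotropy_order K s.
  by rewrite /W_isotropy_order /W_isotropy stab_equivariant.
rewrite /orbit_weight; congr xget; apply/seteqP; split=> q /=.
  by case=> _ [s Os <-] ->; exists s => //; rewrite ord.
by case=> s Os ->; exists (i s); [exists s|rewrite ord].
Qed.

Lemma W_orbits_equivariant K : (image^~ i) @` @W_orbits G S K `<=` @W_orbits G T K.
Proof.
move=> _ [O [s fs ->] <-]; exists (i s); first exact/fixpts_equivariant.
by rewrite W_orbit_equivariant.
Qed.

Lemma chK_equivariant K :
  (\sum_(O \in (image^~ i) @` @W_orbits G S K) orbit_weight K O)%R = chK K S.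
Proof.
rewrite fsbig_image; last by move=> A B _ _; apply: image_set_inj.
by apply: eq_fsbigr => O _; rewrite orbit_weight_equivariant.
Qed.

End Equivariant.
End GSets.

Section Isomorphisms.
Variable G : group.
Implicit Types S T U : gset G.

Lemma gset_iso_refl S : gset_iso S S.
Proof. by exists id, id. Qed.

Lemma gset_iso_sym S T : gset_iso S T -> gset_iso T S.
Proof.
case=> f [f' [fK [f'K feq]]]; exists f', f; do 2!split=> //.
by move=> g t; apply: (can_inj fK); rewrite feq !f'K.
Qed.

Lemma gset_iso_trans S T U : gset_iso S T -> gset_iso T U -> gset_iso S U.
Proof.
case=> f [f' [fK [f'K feq]]] [h [h' [hK [h'K heq]]]].
exists (h \o f), (f' \o h'); split; [|split] => [x|x|g s] /=.
- by rewrite hK fK.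
- by rewrite f'K h'K.
- by rewrite feq heq.
Qed.

Lemma gset_iso_sum S S' T T' :
  gset_iso S S' -> gset_iso T T' -> gset_iso (gsum S T) (gsum S' T').
Proof.
case=> f [f' [fK [f'K feq]]] [h [h' [hK [h'K heq]]]].
exists (fun x => match x with inl s => inl (f s) | inr t => inr (h t) end).
exists (fun x => match x with inl s => inl (f' s) | inr t => inr (h' t) end).
split; [|split].
- by case=> x /=; rewrite ?fK ?hK.
- by case=> x /=; rewrite ?f'K ?h'K.
- by move=> g [s|t] /=; rewrite ?feq ?heq.
Qed.

Lemma gset_iso_empty S T : (S -> False) -> (T -> False) -> gset_iso S T.
Proof.
move=> S0 T0; exists (fun s => False_rect _ (S0 s)), (fun t => False_rect _ (T0 t)).
by split; [move=> s|split; [move=> t|move=> g s]]; [case: (S0 s)|case: (T0 t)|case: (S0 s)].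
Qed.

Lemma gscaleS_iso n S : gset_iso (gscale n.+1 S) (gsum (gscale n S) S).
Proof.
exists (fun x : S * 'I_n.+1 => match unlift ord_max x.2 with
   Some j => @inl (S * 'I_n) S (x.1, j) | None => inr x.1 end).
exists (fun x : (S * 'I_n) + S => match x with
   inl y => (y.1, lift ord_max y.2) | inr s => (s, ord_max) end).
split; [|split].
- by move=> [s i] /=; case: unliftP => [j ->|->].
- by case=> [[s j]|s] /=; rewrite ?liftK ?unlift_none.
- by move=> g [s i] /=; case: unliftP.
Qed.

Lemma equivariant_inl S T : equivariant (inl : S -> gsum S T).
Proof. by []. Qed.
Lemma equivariant_inr S T : equivariant (inr : T -> gsum S T).
Proof. by []. Qed.

Lemma stab_inl S T (s : S) : stab (inl s : gsum S T) = stab s.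
Proof. by apply: stab_equivariant (@equivariant_inl S T) _ _ => ? ? []. Qed.
Lemma stab_inr S T (t : T) : stab (inr t : gsum S T) = stab t.
Proof. by apply: stab_equivariant (@equivariant_inr S T) _ _ => ? ? []. Qed.

Definition ginvariant S (P : set S) := forall g s, P s -> P (gact g s).

Lemma ginvariantC S (P : set S) : ginvariant P -> ginvariant (~` P).
Proof. by move=> hP g s nP Pg; apply: nP; rewrite -(gactK g s); apply: hP. Qed.

Lemma ginvariant_orbit S (x : S) : ginvariant (Defs.orbit x).
Proof. by move=> g s [h _ <-]; exists (g ⋆ h) => //; rewrite gactM. Qed.
#[global] Arguments ginvariant_orbit [S] x.

Definition gsub S (P : set S) (hP : ginvariant P) : gset G.
refine (@GSet G {x : S | P x} (fun g x => exist _ (gact g (sval x)) (hP g _ (svalP x))) _ _).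
- by case=> s p; apply: eq_exist; rewrite gact1.
- by move=> g h [s p]; apply: eq_exist; rewrite gactM.
Defined.

Lemma gsub_split S (P : set S) (hP : ginvariant P) :
  gset_iso S (gsum (gsub hP) (gsub (ginvariantC hP))).
Proof.
exists (fun x => match pselect (P x) with
  | left p => @inl (gsub hP) (gsub (ginvariantC hP)) (exist _ x p)
  | right np => inr (exist _ x np) end).
exists (fun y : gsub hP + gsub (ginvariantC hP) =>
  match y with inl z => sval z | inr z => sval z end).
split; [|split].
- by move=> x; case: pselect.
- by case=> [[x p]|[x p]] /=; case: pselect => // q; congr (_ _); apply: eq_exist.
- move=> g x /=; case: pselect => p; case: pselect => q.
  + by congr inl; apply: eq_exist.
  + by case: q; rewrite -(gactK g x); apply: hP.
  + by case: p; apply: hP.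
  + by congr inr; apply: eq_exist.
Qed.

(* Points with the same isotropy group have isomorphic orbits: g x |-> g y. *)
Definition orbit_map S T (x : S) (y : T)
    (z : gsub (ginvariant_orbit x)) : gsub (ginvariant_orbit y) :=
  exist _ (gact (s2val (cid2 (svalP z))) y) (ex_intro2 _ _ (s2val (cid2 (svalP z))) I erefl).

Lemma orbit_mapE S T (x : S) (y : T) (z : gsub (ginvariant_orbit x)) g :
  stab x = stab y -> gact g x = sval z -> sval (orbit_map y z) = gact g y.
Proof.
move=> sxy E; rewrite /orbit_map /=; case: cid2 => h _ /= Eh.
have : stab x (ginv g ⋆ h) by rewrite /stab /= gactM Eh -E gactK.
by rewrite sxy /stab /= gactM => E'; rewrite -{2}E' gactKV.
Qed.

Lemma gset_iso_orbits S T (x : S) (y : T) : stab x = stab y ->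
  gset_iso (gsub (ginvariant_orbit x)) (gsub (ginvariant_orbit y)).
Proof.
move=> sxy; have syx := esym sxy.
have sval_inj (W : gset G) (w : W) (z z' : gsub (ginvariant_orbit w)) :
    sval z = sval z' -> z = z'.
  by case: z => ? ?; case: z' => ? ? /= E; apply: eq_exist.
exists (orbit_map y), (orbit_map x); split; [|split] => [z|z|h z]; apply: sval_inj;
  case: (svalP z) => g _ Eg.
- by rewrite (orbit_mapE syx (esym (orbit_mapE sxy Eg))).
- by rewrite (orbit_mapE sxy (esym (orbit_mapE syx Eg))).
- have Ehg : gact (h ⋆ g) x = sval (gact h z) by rewrite gactM Eg.
  by rewrite (orbit_mapE sxy Ehg) gactM; congr gact; rewrite (orbit_mapE sxy Eg).
Qed.

End Isomorphisms.

Section ProperCocompact.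
Variable G : group.
Implicit Types S T : gset G.

Definition orbits S : set (set S) := [set O | exists s : S, O = Defs.orbit s].
#[global] Arguments orbits : clear implicits.
Definition norbits S : nat := card_set (orbits S).

Lemma proper_iso S T : gset_iso S T -> proper_gset S -> proper_gset T.
Proof.
case=> f [f' [fK [f'K feq]]] pS t.
by rewrite -(f'K t) (stab_equivariant feq (can_inj fK)).
Qed.

Lemma cocompact_iso S T : gset_iso S T -> cocompact_gset S -> cocompact_gset T.
Proof.
case=> f [f' [fK [f'K feq]]] cS; apply: sub_finite_set (finite_image (image^~ f) cS).
move=> _ [t ->]; exists (Defs.orbit (f' t)); first by exists (f' t).
by rewrite -orbit_equivariant // f'K.
Qed.

Lemma proper_gsum S T : proper_gset S -> proper_gset T -> proper_gset (gsum S T).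
Proof. by move=> pS pT [s|t]; rewrite ?stab_inl ?stab_inr. Qed.

Lemma cocompact_gsum S T :
  cocompact_gset S -> cocompact_gset T -> cocompact_gset (gsum S T).
Proof.
move=> cS cT.
have fST : finite_set ((image^~ inl) @` orbits S `|` (image^~ inr) @` orbits T
    : set (set (gsum S T))).
  by rewrite finite_setU; split; apply: finite_image.
apply: sub_finite_set fST => _ [[s|t] ->].
  by left; exists (Defs.orbit s); [exists s|rewrite (orbit_equivariant (@equivariant_inl _ S T))].
by right; exists (Defs.orbit t); [exists t|rewrite (orbit_equivariant (@equivariant_inr _ S T))].
Qed.

Lemma proper_gscale n S : proper_gset S -> proper_gset (gscale n S).
Proof.
move=> pS; elim: n => [|n IH]; first by case=> s [].
exact: proper_iso (gset_iso_sym (gscaleS_iso n S)) (proper_gsum IH pS).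
Qed.

Lemma cocompact_gscale n S : cocompact_gset S -> cocompact_gset (gscale n S).
Proof.
move=> cS; elim: n => [|n IH].
  by apply: sub_finite_set (@finite_set0 (set (gscale 0 S))) => O [[s []]].
exact: cocompact_iso (gset_iso_sym (gscaleS_iso n S)) (cocompact_gsum IH cS).
Qed.

Section Subsets.
Variables (S : gset G) (P : set S) (hP : ginvariant P).

Lemma stab_gsub (z : gsub hP) : stab z = stab (sval z).
Proof.
apply/seteqP; split=> g /=; first by move/(congr1 sval).
by case: z => s p /= gz; apply: eq_exist.
Qed.

Lemma proper_gsub : proper_gset S -> proper_gset (gsub hP).
Proof. by move=> pS z; rewrite stab_gsub. Qed.

Lemma orbits_gsub : orbits (gsub hP) `<=`
  (preimage sval) @` (orbits S `&` [set O | exists2 s, P s & O = Defs.orbit s]).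
Proof.
move=> _ [z ->]; exists (Defs.orbit (sval z)).
  by split; [exists (sval z)|exists (sval z) => //; exact: svalP].
apply/seteqP; split=> w /=; last by case=> g _ <-; exists g.
case=> g _ E; exists g => //; move: z w E => [s p] [t q] /= E.
exact: eq_exist.
Qed.

Lemma cocompact_gsub : cocompact_gset S -> cocompact_gset (gsub hP).
Proof.
by move=> cS; apply: sub_finite_set (@orbits_gsub) _; exact/finite_image/finite_setIl.
Qed.

End Subsets.

Lemma norbits_gsub_orbitC_lt S (x : S) : cocompact_gset S ->
  (norbits (gsub (ginvariantC (ginvariant_orbit x))) < norbits S)%N.
Proof.
move=> cS; set P := ~` _.
have fP : finite_set (orbits S `&` [set O | exists2 s, P s & O = Defs.orbit s]).
  exact: finite_setIl.
rewrite /norbits.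
apply: leq_ltn_trans (card_set_subset _ (@orbits_gsub _ _ _)) _; first exact: finite_image.
apply: leq_ltn_trans (card_set_image_le _ fP) _.
apply: (card_set_proper (x := Defs.orbit x)) => //.
- by exists x.
- by case=> _ [s Ps E]; apply: Ps; rewrite E; exact: orbit_self.
Qed.

End ProperCocompact.

Section Characters.
Variable G : group.
Implicit Types (K : set G) (S T : gset G).
Local Open Scope ring_scope.

Lemma chK_iso K S T : gset_iso S T -> chK K S = chK K T.
Proof.
case=> f [f' [fK [f'K feq]]]; have finj := can_inj fK.
rewrite -(chK_equivariant feq finj K) [RHS]/chK; apply: eq_fsbigl.
apply/seteqP; split; first exact: W_orbits_equivariant.
move=> _ [t ft ->]; exists (W_orbit K (f' t)); last by rewrite -W_orbit_equivariant // f'K.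
by exists (f' t) => //; apply/(fixpts_equivariant feq finj); rewrite f'K.
Qed.

Lemma W_orbits_gsum K S T : @W_orbits G (gsum S T) K =
  (image^~ inl) @` @W_orbits G S K `|` (image^~ inr) @` @W_orbits G T K.
Proof.
have il := @equivariant_inl G S T; have ir := @equivariant_inr G S T.
have iil : injective (@inl S T) by move=> ? ? [].
have iir : injective (@inr S T) by move=> ? ? [].
apply/seteqP; split; last first.
  by move=> O [] => [/(W_orbits_equivariant il iil)|/(W_orbits_equivariant ir iir)].
move=> _ [[s|t] fx ->].
  left; exists (W_orbit K s); last by rewrite (W_orbit_equivariant il).
  by exists s => //; apply/(fixpts_equivariant il iil).
right; exists (W_orbit K t); last by rewrite (W_orbit_equivariant ir).
by exists t => //; apply/(fixpts_equivariant ir iir).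
Qed.

Lemma chK_gsum K S T :
  finite_set (@W_orbits G S K) -> finite_set (@W_orbits G T K) ->
  chK K (gsum S T) = chK K S + chK K T.
Proof.
move=> fS fT; rewrite /chK W_orbits_gsum fsbigU0; first last.
- move=> _ [[O [s _ ->] <-] [O' _ E]].
  have : ((image^~ inl) (W_orbit K s) : set (gsum S T)) (inl s).
    by exists s => //; exact: W_orbit_self.
  by rewrite -E; case.
- exact: finite_image.
- exact: finite_image.
rewrite (chK_equivariant (@equivariant_inl G S T)) ?(chK_equivariant (@equivariant_inr G S T)) //.
- by move=> ? ? [].
- by move=> ? ? [].
Qed.

Lemma chK_gscale K n S : proper_gset S -> cocompact_gset S ->
  chK K (gscale n S) = n%:R * chK K S.
Proof.
move=> pS cS; elim: n => [|n IH].
  by rewrite mul0r /chK fsbig1 // => O [[s []]].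
rewrite (chK_iso K (gscaleS_iso n S)) chK_gsum ?IH.
- by rewrite -nat1r mulrDl mul1r addrC.
- by apply: finite_W_orbits; [exact: proper_gscale|exact: cocompact_gscale].
- exact: finite_W_orbits.
Qed.

Lemma chK_eq0 K S : (forall s : S, ~ @fixpts G S K s) -> chK K S = 0.
Proof. by move=> nf; apply: fsbig1 => O [s fs _]; case: (nf s). Qed.

Lemma orbit_weight_ge0 K S (O : set S) : 0 <= orbit_weight K O.
Proof. by rewrite /orbit_weight; case: xgetP => // q _ [s _ ->]; rewrite invr_ge0. Qed.

Lemma W_isotropy_order_gt0 K S (s : S) :
  finite_set (stab s) -> @fixpts G S K s -> (0 < W_isotropy_order K s)%N.
Proof.
move=> fs fx; apply: (@card_set_gt0 _ _ (lcoset (gone G) K)).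
  by apply: finite_image; apply: sub_finite_set fs => x [].
by exists (gone G) => //; split; [exact: normalizer1|exact: gact1].
Qed.

Lemma orbit_weight_gt0 K S (s : S) : proper_gset S -> @fixpts G S K s ->
  0 < orbit_weight K (W_orbit K s).
Proof.
move=> pS fx; rewrite /orbit_weight.
case: xgetP => [_ _ [_ [n Nn <-] ->]|no_weight]; last first.
  by case: (no_weight (W_isotropy_order K s)%:R^-1); exists s => //; exact: W_orbit_self.
by rewrite invr_gt0 ltr0n; apply: W_isotropy_order_gt0 (pS _) (fixpts_act fx Nn).
Qed.

Lemma chK_gt0 K S (s : S) : proper_gset S -> cocompact_gset S ->
  @fixpts G S K s -> 0 < chK K S.
Proof.
move=> pS cS fx; have fW := finite_W_orbits K pS cS.
rewrite /chK (fsbigD1 (W_orbit K s)) //; last by exists s.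
apply: lt_le_trans (orbit_weight_gt0 pS fx) _.
by rewrite lerDl; apply: fsumr_ge0 => O _; exact: orbit_weight_ge0.
Qed.

End Characters.

Section Classification.
Variable G : group.
Implicit Types S T : gset G.

Definition same_chars S T := forall C : set (set G), is_conj_class C ->
  chK (class_rep C) S = chK (class_rep C) T.

Lemma chK_gsub_split K S (P : set S) (hP : ginvariant P) :
  proper_gset S -> cocompact_gset S ->
  chK K S = (chK K (gsub hP) + chK K (gsub (ginvariantC hP)))%R.
Proof.
move=> pS cS; rewrite (chK_iso K (gsub_split hP)) chK_gsum //.
  by apply: finite_W_orbits; [exact: proper_gsub|exact: cocompact_gsub].
by apply: finite_W_orbits; [exact: proper_gsub|exact: cocompact_gsub].
Qed.

Lemma same_chars_gsub_orbitC S T (x : S) (y : T) :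
  proper_gset S -> cocompact_gset S -> proper_gset T -> cocompact_gset T ->
  stab x = stab y -> same_chars S T ->
  same_chars (gsub (ginvariantC (ginvariant_orbit x)))
             (gsub (ginvariantC (ginvariant_orbit y))).
Proof.
move=> pS cS pT cT sxy ST C hC; have := ST C hC.
rewrite (chK_gsub_split _ (ginvariant_orbit x)) // (chK_gsub_split _ (ginvariant_orbit y)) //.
by rewrite (chK_iso _ (gset_iso_orbits sxy)); move/addrI.
Qed.

Lemma max_stab_matched S T (x : S) :
  proper_gset S -> cocompact_gset S -> proper_gset T -> cocompact_gset T ->
  same_chars S T -> (forall t : T, (gcard (stab t) <= gcard (stab x))%N) ->
  exists (x' : S) (y : T), stab x' = stab y.
Proof.
move=> pS cS pT cT ST xmax.
have [g Eg] := class_repP (stab x); set K := class_rep _ in Eg.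
have hC : is_conj_class (conj_class_of (stab x)).
  by exists (stab x) => //; split; [exact: is_subgroup_stab|exact: pS].
have Kx : K = stab (gact g x) by rewrite Eg stab_act.
have chT : (0 < chK K T)%R.
  by rewrite -(ST _ hC); apply: (chK_gt0 (s := gact g x)) => //; rewrite -/K Kx.
have [y Ky] : exists y : T, @fixpts G T K y.
  apply: contrapT => noy; move: chT; rewrite chK_eq0 ?ltxx // => y Ky.
  by apply: noy; exists y.
exists (gact g x), y; rewrite -Kx.
apply: (@card_set_subset_eq {classic G}) => //.
by have := xmax y; rewrite -(gcard_conjs g (pS x)) -Eg.
Qed.

Lemma exists_matched_stab S T (z : gsum S T) :
  proper_gset S -> cocompact_gset S -> proper_gset T -> cocompact_gset T ->
  same_chars S T -> exists (x : S) (y : T), stab x = stab y.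
Proof.
move=> pS cS pT cT ST.
have [[x|y] zmax] := exists_max_stab z (proper_gsum pS pT) (cocompact_gsum cS cT).
  apply: (max_stab_matched (x := x)) => // t.
  by have := zmax (inr t); rewrite stab_inl stab_inr.
have TS : same_chars T S by move=> C hC; rewrite ST.
have [y' [x' Exy]] : exists (y' : T) (x' : S), stab y' = stab x'.
  apply: (max_stab_matched (x := y)) => // s.
  by have := zmax (inl s); rewrite stab_inl stab_inr.
by exists x', y'.
Qed.

Theorem same_chars_iso S T :
  proper_gset S -> cocompact_gset S -> proper_gset T -> cocompact_gset T ->
  same_chars S T -> gset_iso S T.
Proof.
move: {2}(norbits S).+1 (ltnSn (norbits S)) => n.
elim: n S T => [//|n IHn] S T ltSn pS cS pT cT ST.
have [[z _]|noz] := pselect (exists z : gsum S T, True); last first.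
  by apply: gset_iso_empty => [s|t]; apply: noz; [exists (inl s)|exists (inr t)].
have [x [y sxy]] := exists_matched_stab z pS cS pT cT ST.
pose Px := ginvariant_orbit x; pose Py := ginvariant_orbit y.
apply: gset_iso_trans (gsub_split Px) _; apply: gset_iso_trans (gset_iso_sym (gsub_split Py)).
apply: gset_iso_sum; first exact: gset_iso_orbits.
apply: IHn; first exact: leq_trans (norbits_gsub_orbitC_lt x cS) ltSn.
- exact: proper_gsub.
- exact: cocompact_gsub.
- exact: proper_gsub.
- exact: cocompact_gsub.
- exact: same_chars_gsub_orbitC.
Qed.

End Classification.

Section Quotient.
Variables (G : group) (H : set G).
Hypothesis sH : is_subgroup H.

Lemma lcosetM g g' : gmul g @` lcoset g' H = lcoset (g ⋆ g') H.
Proof.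
apply/seteqP; split=> x /=; first by case=> _ [k Hk <-] <-; exists k => //; rewrite gmulA.
by case=> k Hk <-; exists (g' ⋆ k); [exists k|rewrite gmulA].
Qed.

Definition quotient_car : Type := {A : set G | exists g, A = lcoset g H}.

Lemma quotient_act_subproof g (A : quotient_car) : exists g', gmul g @` sval A = lcoset g' H.
Proof. by case: A => A [g' E] /=; exists (g ⋆ g'); rewrite E lcosetM. Qed.

Definition quotient_gset : gset G.
refine (@GSet G quotient_car
  (fun g A => exist _ (gmul g @` sval A) (quotient_act_subproof g A)) _ _).
- move=> [A p]; apply: eq_exist => /=; apply/seteqP; split=> x /=.
    by case=> y Ay <-; rewrite gmul1x.
  by move=> Ax; exists x => //; rewrite gmul1x.
- move=> g h [A p]; apply: eq_exist => /=; apply/seteqP; split=> x /=.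
    by case=> y Ay <-; exists (h ⋆ y); [exists y|rewrite gmulA].
  by case=> _ [y Ay <-] <-; exists y => //; rewrite gmulA.
Defined.

Definition coset (g : G) : quotient_gset := exist _ (lcoset g H) (ex_intro _ g erefl).

Lemma lcoset_eqP g h : lcoset g H = lcoset h H <-> H (ginv h ⋆ g).
Proof.
case: sH => H1 [HM HV]; split=> [E|Hhg].
  have : lcoset h H g by rewrite -E; exists (gone G); [exact: H1|exact: gmulx1].
  by case=> k Hk <-; rewrite gmulKx.
apply/seteqP; split=> x [k Hk <-].
  by exists (ginv h ⋆ g ⋆ k); [exact: HM|rewrite !gmulA gmulxV gmul1x].
exists (ginv (ginv h ⋆ g) ⋆ k); first by apply: HM => //; apply: HV.
by rewrite ginvM ginvK !gmulA gmulxV gmul1x.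
Qed.

Lemma coset_act a g : gact a (coset g) = coset (a ⋆ g).
Proof. by apply: eq_exist; rewrite /= lcosetM. Qed.

Lemma cosetP (c : quotient_gset) : exists g, c = coset g.
Proof. by case: c => A [g E]; exists g; apply: eq_exist. Qed.

Lemma stab_coset g : stab (coset g) = conjs g H.
Proof.
apply/seteqP; split=> a; rewrite /stab /mkset coset_act.
  move=> /(congr1 sval) /lcoset_eqP Hga; exists (ginv g ⋆ (a ⋆ g)) => //.
  by rewrite !gmulA gmulxV gmul1x gmulxK.
case=> k Hk <-; apply: eq_exist; apply/lcoset_eqP.
by rewrite -!gmulA gmulVx gmulx1 gmulKx.
Qed.

Lemma cocompact_quotient : cocompact_gset quotient_gset.
Proof.
apply: sub_finite_set (finite_set1 (Defs.orbit (coset (gone G)))).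
move=> _ [c ->]; have [g ->] := cosetP c.
by rewrite /= -(gmulx1 g) -coset_act orbit_act.
Qed.

Hypothesis fH : finite_set H.

Lemma proper_quotient : proper_gset quotient_gset.
Proof. by move=> c; have [g ->] := cosetP c; rewrite stab_coset; exact: finite_conjs. Qed.

Local Open Scope ring_scope.

(* ch_K [Γ/H] <> 0 forces K to fix a coset gH, i.e. K <= g H g^-1. *)
Lemma chK_quotient_neq0 K : finite_set K -> (gcard H <= gcard K)%N ->
  chK K quotient_gset != 0 -> exists g, K = conjs g H.
Proof.
move=> fK le nz; apply: contrapT => noconj; move/eqP: nz; apply.
apply: chK_eq0 => c Kc; apply: noconj; have [g Ecg] := cosetP c; exists g.
have KH : K `<=` stab c by [].
rewrite Ecg stab_coset in KH.
apply: (@card_set_subset_eq {classic G}) => //; first exact: finite_conjs.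
by have := gcard_conjs g fH; rewrite /gcard => ->.
Qed.

Lemma chK_quotient_gt0 : 0 < chK H quotient_gset.
Proof.
apply: (chK_gt0 (s := coset (gone G)) proper_quotient cocompact_quotient).
move=> k Hk; rewrite coset_act gmulx1; apply: eq_exist.
by apply/lcoset_eqP; rewrite ginv1 gmul1x.
Qed.

End Quotient.

Section Rationalization.
Variable G : group.
Implicit Types (P Q : pcgset G) (a b : AQ G) (K : set G).
Local Open Scope ring_scope.

Canonical pc_gsum P Q : pcgset G :=
  PCGSet (proper_gsum (@pc_proper _ P) (@pc_proper _ Q))
         (cocompact_gsum (@pc_cocompact _ P) (@pc_cocompact _ Q)).
Canonical pc_gscale n P : pcgset G :=
  PCGSet (proper_gscale (n := n) (@pc_proper _ P)) (cocompact_gscale n (@pc_cocompact _ P)).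

Lemma chK_pc_gsum K P Q : chK K (gsum P Q) = chK K P + chK K Q.
Proof. by apply: chK_gsum; apply: finite_W_orbits; case: P Q => ? ? ? [] ? ? ?. Qed.

Lemma chK_pc_gscale K n P : chK K (gscale n P) = n%:R * chK K P.
Proof. by apply: chK_gscale; case: P. Qed.

Lemma chQ_K_AQ_eq K a b : AQ_eq a b -> chQ_K K a = chQ_K K b.
Proof.
case: a b => [Pa Na da] [Pb Nb db] [k k_gt0 [U iso]].
have := chK_iso K iso; rewrite !chK_pc_gsum !chK_pc_gscale !natrM /chQ_K /= => /addIr E.
have k0 : k%:R != 0 :> rat by rewrite pnatr_eq0 -lt0n.
have d0 (d : nat) : d.+1%:R != 0 :> rat by rewrite pnatr_eq0.
apply/eqP; rewrite eqr_div //; apply/eqP/(mulfI k0).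
by move: E; rewrite !mulrBl !mulrBr !mulrA; lra.
Qed.

Lemma AQ_eq_same_chars a b :
  (forall C, is_conj_class C -> chQ a C = chQ b C) -> AQ_eq a b.
Proof.
case: a b => [Pa Na da] [Pb Nb db] /= ab.
have d0 (d : nat) : d.+1%:R != 0 :> rat by rewrite pnatr_eq0.
exists 1%N => //; exists Pa; rewrite !mul1n; apply: gset_iso_sum (gset_iso_refl _).
apply: same_chars_iso; try exact: pc_proper; try exact: pc_cocompact.
move=> C hC; have := ab C hC; rewrite /chQ /chQ_K /= !chK_pc_gsum !chK_pc_gscale.
by move/eqP; rewrite eqr_div // => /eqP; lra.
Qed.

Lemma rat_nat_frac (x : rat) : exists z m : nat,
  x = z%:R / m.+1%:R \/ x = - (z%:R / m.+1%:R).
Proof.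
rewrite -(divq_num_den x).
have := denq_gt0 x; case: (denq x) => [[|m]|d] // _.
by case: (numq x) => z; [exists z, m; left|exists z.+1, m; right; rewrite NegzE mulNr].
Qed.

Lemma chQ_K_addr a (x : rat) Q : exists a' : AQ G,
  forall K, chQ_K K a' = chQ_K K a + x * chK K Q.
Proof.
case: a => P N d; have [z [m [->|->]]] := rat_nat_frac x.
- exists (MkAQ (pc_gsum (pc_gscale m.+1 P) (pc_gscale (d.+1 * z) Q))
               (pc_gscale m.+1 N) (d * m.+1 + m)) => K.
  rewrite /chQ_K /= -addnS -mulSnr chK_pc_gsum !chK_pc_gscale !natrM.
  by field; rewrite !nat1r !pnatr_eq0.
- exists (MkAQ (pc_gscale m.+1 P)
               (pc_gsum (pc_gscale m.+1 N) (pc_gscale (d.+1 * z) Q)) (d * m.+1 + m)) => K.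
  rewrite /chQ_K /= -addnS -mulSnr chK_pc_gsum !chK_pc_gscale !natrM.
  by field; rewrite !nat1r !pnatr_eq0.
Qed.

Definition empty_gset : gset G.
by refine (@GSet G False (fun _ x => x) _ _).
Defined.

Definition pc_empty : pcgset G.
refine (@PCGSet G empty_gset _ _); first by [].
by apply: sub_finite_set (@finite_set0 _) => O [[]].
Defined.

Lemma chQ_surj_on (E : {fset set (set G)}) (c : set (set G) -> rat) :
  (forall C, C \in E -> is_conj_class C) ->
  exists a : AQ G, forall C, C \in E -> chQ a C = c C.
Proof.
move: {2}#|` E|%fset.+1 (ltnSn #|` E|%fset) => n.
elim: n E => [//|n IHn] E ltEn Eclass.
have [[D DE]|noD] := pselect (exists D, D \in E); last first.
  by exists (MkAQ pc_empty pc_empty 0) => C CE; case: noD; exists C.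
pose ordE k := `[< exists2 D, D \in E & gcard (class_rep D) = k >].
have [|k /asboolP [{DE}D DE Dk] kmin] := ex_minnP (P := ordE).
  by exists (gcard (class_rep D)); apply/asboolP; exists D.
have [sD fD] := fin_subgroup_class_rep (Eclass D DE).
pose Q : pcgset G := PCGSet (proper_quotient sD fD) (cocompact_quotient (class_rep D)).
have [a aE] : exists a : AQ G, forall C, C \in (E `\ D)%fset -> chQ a C = c C.
  apply: IHn => [|C]; last by rewrite in_fsetD1 => /andP [_ /Eclass].
  by move: ltEn; rewrite (cardfsD1 D) DE add1n ltnS.
have [a' a'E] := chQ_K_addr a ((c D - chQ a D) / chK (class_rep D) Q) Q.
exists a' => C CE; rewrite /chQ a'E.
have [->|CD] := eqVneq C D.
  by rewrite -/(chQ a D); field; rewrite lt0r_neq0 // chK_quotient_gt0.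
rewrite -/(chQ a C) aE ?in_fsetD1 ?CD //.
suff -> : chK (class_rep C) Q = 0 by rewrite mulr0 addr0.
apply/eqP; apply: contraT => nz.
have [_ fC] := fin_subgroup_class_rep (Eclass C CE).
have [|g Eg] := chK_quotient_neq0 sD fD fC _ nz.
  by rewrite Dk; apply: kmin; apply/asboolP; exists C.
case/eqP: CD.
rewrite -(class_rep_class (Eclass C CE)) -(class_rep_class (Eclass D DE)) Eg.
exact: conj_class_conjs.
Qed.

End Rationalization.

Theorem lemma8p10 (G : group) :
  (forall a b : AQ G, AQ_eq a b ->
     forall C, is_conj_class C -> chQ a C = chQ b C) /\
  (forall a b : AQ G,
     (forall C, is_conj_class C -> chQ a C = chQ b C) -> AQ_eq a b) /\
  (finite_set [set C : set (set G) | is_conj_class C] ->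
     forall c : set (set G) -> rat,
       exists a : AQ G, forall C, is_conj_class C -> chQ a C = c C).
Proof.
split; first by move=> a b ab C _; exact: chQ_K_AQ_eq.
split=> [|fin c]; first exact: AQ_eq_same_chars.
have [|a aE] := @chQ_surj_on G (fset_set [set C | is_conj_class C]) c.
  by move=> C; rewrite in_fset_set // inE.
by exists a => C hC; apply: aE; rewrite in_fset_set // inE.
Qed.
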